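(* Let $a,b,d\in\mathbb C$ with $a\notin\mathbb Z$ and $d\notin\{0,-1,-2,\dots\}$. Then, as an identity of formal power series in $x,y$, $$\mathrm H_4(a,b;d;x,y)={}_1F_1(a;d;x)\,{}_1F_1(b;1-a;-y)+\sum_{k=1}^\infty\sum_{l=1}^k\frac{(-1)^{k+l}(k-1)!}{(l-1)!\,l!\,(k-l)!}\,\frac{(b)_l}{(1-a)_l(d)_k}\,x^ky^l\,{}_1F_1(a+k;d+k;x)\,{}_1F_1(b+l;1-a+l;-y).$$
   Context: Pochhammer symbol: $(\lambda)_k=\Gamma(\lambda+k)/\Gamma(\lambda)$ for every integer $k$ (possibly negative) whenever defined; $(\lambda)_0=1$. ${}_1F_1(a;c;x)=\sum_{k\ge0}\frac{(a)_k}{(c)_k k!}x^k$. Confluent Horn function $\mathrm H_4(a,b;d;x,y)=\sum_{p,q\ge0}\frac{(a)_{p-q}(b)_q}{(d)_p\,p!\,q!}x^py^q$. All functions are regarded as formal power series in $x,y$; the infinite double sum converges in the formal (degree) topology. *)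

(* Formal power series in two variables x, y over a field R
   are represented by their coefficient functions nat -> nat -> R,
   f p q = coefficient of x^p y^q. *)
From HB Require Import structures.
From mathcomp Require Import all_boot all_order all_algebra all_field.
Set Implicit Arguments. Unset Strict Implicit. Unset Printing Implicit Defensive.
Import Order.TTheory GRing.Theory Num.Theory.
Local Open Scope ring_scope.

Section Defs.
Variable R : fieldType.

(* Pochhammer symbol for an integer index k:
   k >= 0 : (l)_k = l (l+1) ... (l+k-1);
   k = -m < 0 : (l)_{-m} = Gamma(l-m)/Gamma(l) = 1/((l-1)(l-2)...(l-m)). *)
Definition poch (l : R) (k : int) : R :=
  match k with
  | Posz n => \prod_(i < n) (l + i%:R)
  | Negz m => (\prod_(i < m.+1) (l - (i.+1)%:R))^-1
  end.

Definition fps2 := nat -> nat -> R.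

Definition F11 (a c : R) (k : nat) : R := poch a k%:Z / (poch c k%:Z * (k`!)%:R).

Definition fps_x (f : nat -> R) : fps2 := fun p q => if q == 0%N then f p else 0.
Definition fps_y (f : nat -> R) : fps2 := fun p q => if p == 0%N then f q else 0.
Definition fps_neg (f : nat -> R) : nat -> R := fun k => (-1) ^+ k * f k.

Definition fps2_mul (f g : fps2) : fps2 := fun p q =>
  \sum_(i < p.+1) \sum_(j < q.+1) f i j * g (p - i)%N (q - j)%N.
Definition fps2_add (f g : fps2) : fps2 := fun p q => f p q + g p q.
Definition fps2_scale (c : R) (f : fps2) : fps2 := fun p q => c * f p q.
Definition fps2_mono (k l : nat) : fps2 := fun p q => if (p == k) && (q == l) then 1 else 0.

Definition H4 (a b d : R) : fps2 := fun p q =>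
  poch a (p%:Z - q%:Z) * poch b q%:Z / (poch d p%:Z * (p`!)%:R * (q`!)%:R).

Definition rhs_term (a b d : R) (k l : nat) : fps2 :=
  fps2_scale
    ((-1) ^+ (k + l) * ((k.-1)`!)%:R / (((l.-1)`!)%:R * (l`!)%:R * ((k - l)`!)%:R)
      * (poch b l%:Z / (poch (1 - a) l%:Z * poch d k%:Z)))
    (fps2_mul (fps2_mono k l)
       (fps2_mul (fps_x (F11 (a + k%:R) (d + k%:R)))
                 (fps_y (fps_neg (F11 (b + l%:R) (1 - a + l%:R)))))).

Definition rhs_partial (a b d : R) (M : nat) : fps2 :=
  fps2_add (fps2_mul (fps_x (F11 a d)) (fps_y (fps_neg (F11 b (1 - a)))))
    (fun p q => \sum_(1 <= k < M.+1) \sum_(1 <= l < k.+1) rhs_term a b d k l p q).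

End Defs.

From HB Require Import structures.
From mathcomp Require Import all_boot all_order all_algebra all_field.
From mathcomp Require Import ring.
Set Implicit Arguments. Unset Strict Implicit. Unset Printing Implicit Defensive.
Import Order.TTheory GRing.Theory Num.Theory.
Local Open Scope ring_scope.

(* Compare the coefficients of x^p y^q.  The product 1F1(a;d;x) 1F1(b;1-a;-y)
   contributes c(p,q) := (a)_p (b)_q (-1)^q / ((d)_p (1-a)_q p! q!), and the
   (k,l)-th summand contributes c(p,q) (-1)^k C(p,k) k! C(k-1,l-1) C(q,l) / (a)_k,
   which vanishes for k > p.  Summing over l by Vandermonde's convolution,
   sum_l C(k-1,l-1) C(q,l) = C(q+k-1,k) = (q)_k / k!, the coefficient becomes
   c(p,q) sum_k (-1)^k C(p,k) (q)_k / (a)_k = c(p,q) (a-q)_p / (a)_p by the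
   Chu-Vandermonde identity.  Finally (-1)^q (1-a)_q = (a-q)_q and
   (a)_(p-q) (a-q)_q = (a-q)_p identify this with the coefficient of H4. *)

Arguments poch : simpl never.

Section Pochhammer.
Variable R : fieldType.
Implicit Types x : R.

Lemma poch0 x : poch x 0%:Z = 1.
Proof. by rewrite /poch big_ord0. Qed.

Lemma pochS x n : poch x n.+1%:Z = poch x n%:Z * (x + n%:R).
Proof. by rewrite /poch big_ord_recr. Qed.

Lemma pochD x m n : poch x (m + n)%N%:Z = poch x m%:Z * poch (x + m%:R) n%:Z.
Proof.
elim: n => [|n IHn]; first by rewrite addn0 poch0 mulr1.
by rewrite addnS !pochS IHn natrD addrA mulrA.
Qed.

Lemma poch_shift_neq0 x m n : poch x (m + n)%N%:Z != 0 -> poch (x + m%:R) n%:Z != 0.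
Proof. by rewrite pochD mulf_eq0 negb_or => /andP[]. Qed.

Lemma pochSl x n : poch x n.+1%:Z = x * poch (x + 1) n%:Z.
Proof. by rewrite -add1n pochD /poch big_ord1 addr0. Qed.

Lemma poch_subn x n : poch (x - n%:R) n%:Z = \prod_(i < n) (x - i.+1%:R).
Proof.
elim: n x => [|n IHn] x; first by rewrite poch0 big_ord0.
rewrite pochSl big_ord_recr mulrC -IHn; congr (poch _ _ * _).
by rewrite -natr1; ring.
Qed.

Lemma poch_reflect x n : (-1) ^+ n * poch (1 - x) n%:Z = poch (x - n%:R) n%:Z.
Proof.
rewrite poch_subn; elim: n => [|n IHn]; first by rewrite mul1r poch0 big_ord0.
by rewrite exprS pochS big_ord_recr -IHn /= -addn1 natrD; ring.
Qed.

(* The hypothesis is only needed for [p < q], where [(x)_(p-q)] has negative index. *)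
Lemma poch_subz_shift x p q : (forall k : int, poch x k != 0) ->
  poch x (p%:Z - q%:Z) * poch (x - q%:R) q%:Z = poch (x - q%:R) p%:Z.
Proof.
move=> hx; case: (leqP q p) => [le_qp|lt_pq].
  by rewrite subzn // mulrC -[in RHS](subnKC le_qp) pochD subrK.
have [m ->] : exists m, q = (p + m.+1)%N.
  by exists (q - p).-1; rewrite prednK ?subn_gt0 // subnKC // ltnW.
have -> : p%:Z - (p + m.+1)%N%:Z = Negz m by rewrite NegzE PoszD opprD addNKr.
rewrite pochD (_ : x - (p + m.+1)%:R + p%:R = x - m.+1%:R); last by rewrite natrD; ring.
rewrite poch_subn mulrCA mulVf ?mulr1 //.
by have := hx (Negz m); rewrite /poch invr_eq0.
Qed.

Lemma poch_natr (q k : nat) : poch (q%:R : R) k%:Z = (k`! * 'C((q + k).-1, k))%:R.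
Proof.
rewrite mulnC bin_ffact; elim: k => [|k IHk]; first by rewrite poch0.
by rewrite pochS IHk addnS /= ffactnS natrM mulrC natrD.
Qed.

Lemma poch_nat_neq0 x :
  (forall n : nat, x != - n%:R) -> forall n : nat, poch x n%:Z != 0.
Proof. by move=> hx n; apply/prodf_neq0 => i _; rewrite addr_eq0. Qed.

Lemma poch_int_neq0 x : (forall n : int, x != n%:~R) -> forall k : int, poch x k != 0.
Proof.
move=> hx [n|m].
  by apply: poch_nat_neq0 => j; have := hx (- j%:Z); rewrite mulrNz.
rewrite /poch invr_eq0; apply/prodf_neq0 => i _; rewrite subr_eq0.
exact: hx i.+1.
Qed.

Lemma chu_vandermonde p a x : (forall n : nat, poch a n%:Z != 0) ->
  \sum_(k < p.+1) (-1) ^+ k * 'C(p, k)%:R * poch x k%:Z / poch a k%:Z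
  = poch (a - x) p%:Z / poch a p%:Z.
Proof.
elim: p a x => [|p IHp] a x ha.
  by rewrite big_ord1 !poch0 expr0 !mul1r invr1.
have ha1 n : poch (a + 1) n%:Z != 0.
  by apply: contraNneq (ha n.+1); rewrite pochSl => ->; rewrite mulr0.
have a_neq0 : a != 0 by have := ha 1%N; rewrite pochSl poch0 mulr1.
have ap_neq0 : a + p%:R != 0.
  by have := ha p.+1; rewrite pochS mulf_eq0 negb_or => /andP[].
pose t n (y c : R) (k : nat) := (-1) ^+ k * 'C(n, k)%:R * poch y k%:Z / poch c k%:Z.
have pascal : \sum_(k < p.+2) t p.+1 x a k =
    \sum_(k < p.+1) t p x a k - x / a * \sum_(k < p.+1) t p (x + 1) (a + 1) k.
  have t_shift k : t p.+1 x a k.+1 = t p x a k.+1 - x / a * t p (x + 1) (a + 1) k.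
    by rewrite /t binS natrD !pochSl exprS; field; rewrite a_neq0 ha1.
  have t_top : t p x a p.+1 = 0 by rewrite /t bin_small // mulr0 !mul0r.
  rewrite big_ord_recl; under eq_bigr => i _ do rewrite /bump /= t_shift.
  rewrite sumrB -big_distrr addrA; congr (_ - _).
  rewrite [in RHS]big_ord_recl big_ord_recr /= t_top addr0.
  by rewrite /t !bin0.
rewrite pascal !IHp // (_ : a + 1 - (x + 1) = a - x); last by ring.
have -> : poch (a + 1) p%:Z = poch a p%:Z * (a + p%:R) / a.
  by rewrite -pochS pochSl [RHS]mulrC mulKf.
by rewrite !pochS; field; rewrite a_neq0 ap_neq0 ha.
Qed.

End Pochhammer.

Lemma sum_bin_binS k q :
  (\sum_(l < k.+1) 'C(k, l) * 'C(q, l.+1) = 'C(q + k, k.+1))%N.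
Proof.
rewrite -binomial.Vandermonde [RHS]big_ord_recl /= subn0 (bin_small (ltnSn k)).
rewrite muln0 add0n.
apply: eq_bigr => i _; rewrite mulnC /bump /= add1n subSS bin_sub //.
by rewrite -ltnS.
Qed.

Section Coefficients.
Variable R : fieldType.

Lemma coef_fps2_mul_xy (f g : nat -> R) p q :
  fps2_mul (fps_x f) (fps_y g) p q = f p * g q.
Proof.
rewrite /fps2_mul (bigD1 ord_max) //= big_ord_recl big1 => [|j _]; last first.
  by rewrite /fps_x mul0r.
rewrite big1 => [|i ne_ip]; last first.
  have lt_ip : (i < p)%N.
    by move: (ltn_ord i) ne_ip; rewrite ltnS leq_eqVlt -val_eqE /= => /orP[->|].
  by apply: big1 => j _; rewrite /fps_x /fps_y subn_eq0 leqNgt lt_ip mulr0.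
by rewrite /fps_x /fps_y /= subnn subn0 !addr0.
Qed.

Lemma coef_fps2_mul_mono k l (g : fps2 R) p q :
  fps2_mul (fps2_mono R k l) g p q =
  if (k <= p)%N && (l <= q)%N then g (p - k)%N (q - l)%N else 0.
Proof.
transitivity (\sum_(i < p.+1 | i == k :> nat) \sum_(j < q.+1 | j == l :> nat)
                g (p - i)%N (q - j)%N).
  rewrite /fps2_mul /fps2_mono [RHS]big_mkcond; apply: eq_bigr => i _ /=.
  case: eqP => _ /=; last by apply: big1 => j _; rewrite mul0r.
  by rewrite [RHS]big_mkcond; apply: eq_bigr => j _; case: eqP; rewrite ?mul1r ?mul0r.
rewrite (big_ord1_eq _ (fun i => \sum_(j < q.+1 | j == l :> nat) g (p - i)%N (q - j)%N)).
by rewrite (big_ord1_eq _ (fun j => g (p - k)%N (q - j)%N)) !ltnS; case: (k <= p)%N.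
Qed.

End Coefficients.

Section Expansion.
Variable R : fieldType.
Hypothesis R_char0 : [pchar R] =i pred0.
Variables a b d : R.
Hypothesis poch_a : forall k : int, poch a k != 0.
Hypothesis poch_d : forall n : nat, poch d n%:Z != 0.
Hypothesis poch_1a : forall n : nat, poch (1 - a) n%:Z != 0.

Let natr_neq0 n : (0 < n)%N -> n%:R != 0 :> R.
Proof. by move/pcharf0P: R_char0 => ->; rewrite -lt0n. Qed.

Let fact_neq0 n : n`!%:R != 0 :> R.
Proof. exact/natr_neq0/fact_gt0. Qed.

Let bin_neq0 n m : (m <= n)%N -> 'C(n, m)%:R != 0 :> R.
Proof. by rewrite -bin_gt0; apply: natr_neq0. Qed.

Let prod_coef p q := F11 a d p * fps_neg (F11 b (1 - a)) q.

Lemma rhs_termE k l p q : (l <= k)%N -> (k < p)%N ->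
  rhs_term a b d k.+1 l.+1 p q = prod_coef p q *
   ((-1) ^+ k.+1 * ('C(p, k.+1) * (k.+1)`! * ('C(k, l) * 'C(q, l.+1)))%:R
     / poch a k.+1%:Z).
Proof.
move=> le_lk lt_kp; rewrite /rhs_term /fps2_scale coef_fps2_mul_mono.
case: (leqP l.+1 q) => [le_lq|lt_ql]; last first.
  by rewrite (bin_small lt_ql) andbF !muln0 !mulr0 mul0r mulr0.
have [m ->] : exists m : nat, p = (k.+1 + m)%N by exists (p - k.+1)%N; rewrite subnKC.
have [n ->] : exists n : nat, q = (l.+1 + n)%N by exists (q - l.+1)%N; rewrite subnKC.
have := poch_d (k.+1 + m)%N; have := poch_1a (l.+1 + n)%N.
move=> /poch_shift_neq0 al_neq0 /poch_shift_neq0 dk_neq0.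
rewrite ifT ?leq_addr // !addKn coef_fps2_mul_xy /prod_coef /F11 /fps_neg.
rewrite !pochD exprD.
rewrite -(bin_fact (leq_addr m k.+1)) -(bin_fact (leq_addr n l.+1)) -(bin_fact le_lk).
rewrite !addKn subSS [l.+1.-1]/= !factS !natrM exprD; field.
rewrite poch_a poch_d poch_1a al_neq0 dk_neq0 !fact_neq0 !bin_neq0 ?leq_addr //.
by rewrite !nat1r !natr_neq0.
Qed.

Lemma sum_rhs_term k p q : (k < p)%N ->
  \sum_(1 <= l < k.+2) rhs_term a b d k.+1 l p q =
  prod_coef p q * ((-1) ^+ k.+1 * 'C(p, k.+1)%:R * poch q%:R k.+1%:Z / poch a k.+1%:Z).
Proof.
move=> lt_kp; rewrite big_add1 /= big_mkord.
rewrite (eq_bigr (fun l : 'I_k.+1 => prod_coef p q * ((-1) ^+ k.+1 *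
    ('C(p, k.+1) * (k.+1)`!)%:R / poch a k.+1%:Z) * ('C(k, l) * 'C(q, l.+1))%:R)).
  rewrite -mulr_sumr -natr_sum sum_bin_binS poch_natr addnS -[(q + k).+1.-1]/(q + k)%N.
  (* Naming [(k.+1)`!] keeps [natrM] from unfolding it. *)
  set f := (k.+1)`!; rewrite !natrM; ring.
move=> l _; rewrite (rhs_termE q (ltnSE (ltn_ord l)) lt_kp).
set f := (k.+1)`!; rewrite !natrM; ring.
Qed.

Lemma coef_rhs_partial M p q : (p <= M)%N ->
  rhs_partial a b d M p q =
  prod_coef p q * \sum_(k < p.+1) (-1) ^+ k * 'C(p, k)%:R * poch q%:R k%:Z / poch a k%:Z.
Proof.
move=> le_pM; have tail_eq0 :
    \sum_(p.+1 <= k < M.+1) \sum_(1 <= l < k.+1) rhs_term a b d k l p q = 0.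
  rewrite big_nat_cond big1 // => k /andP[/andP[lt_pk _] _]; apply: big1 => l _.
  by rewrite /rhs_term /fps2_scale coef_fps2_mul_mono leqNgt lt_pk mulr0.
rewrite /rhs_partial /fps2_add coef_fps2_mul_xy -/(prod_coef p q).
rewrite (big_cat_nat (ltn0Sn p) (le_pM : p < M.+1)%N) tail_eq0 big_add1 big_mkord /=.
rewrite [in RHS]big_ord_recl /= expr0 bin0 !poch0 !mul1r invr1 addr0 mulrDr mulr1.
by rewrite mulr_sumr; congr (_ + _); apply: eq_bigr => k _; rewrite sum_rhs_term.
Qed.

Lemma coef_H4 p q : H4 a b d p q = prod_coef p q * (poch (a - q%:R) p%:Z / poch a p%:Z).
Proof.
have reflect_1a : poch (1 - a) q%:Z = (-1) ^+ q * poch (a - q%:R) q%:Z.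
  by rewrite -poch_reflect signrMK.
have aq_neq0 : poch (a - q%:R) q%:Z != 0.
  by apply: contraNneq (poch_1a q); rewrite reflect_1a => ->; rewrite mulr0.
rewrite /H4 /prod_coef /F11 /fps_neg -(poch_subz_shift p q poch_a) reflect_1a.
by field; rewrite aq_neq0 poch_a poch_d !fact_neq0 signr_eq0.
Qed.

Lemma coef_rhs_partial_H4 M p q : (p <= M)%N -> rhs_partial a b d M p q = H4 a b d p q.
Proof.
move=> le_pM; rewrite (coef_rhs_partial q le_pM).
by rewrite (chu_vandermonde p q%:R (fun n : nat => poch_a n)) coef_H4.
Qed.

End Expansion.

Theorem mainTheorem8 (C : numClosedFieldType) (a b d : C)
  (ha : forall n : int, a != n%:~R)
  (hd : forall n : nat, d != - n%:R) :
  forall p q : nat, exists N : nat, forall M : nat, (N <= M)%N ->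
    rhs_partial a b d M p q = H4 a b d p q.
Proof.
move=> p q; exists p => M le_pM.
apply: (coef_rhs_partial_H4 (pchar_num C)) le_pM.
- exact: poch_int_neq0.
- exact: poch_nat_neq0.
apply: poch_nat_neq0 => n; apply: contra (ha n.+1) => /eqP eq_1a; apply/eqP.
by rewrite -[a](subKr 1) eq_1a opprK pmulrn nat1r.
Qed.
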